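(* Let $(I_t)_{t\in\mathbb{Z}}$ be a stochastic process such that there exists a family $(I_t^n)_{t\in\mathbb{Z}}$, $n\in\mathbb{N}$, of $\{0,1\}$-valued stationary stochastic processes with $P(I_0^n=1)>0$ for all $n$ and $$\mathcal{L}\bigl((I_t^n)_{t\in\{-u,\dots,v\}}\mid I_0^n=1\bigr)\Longrightarrow \mathcal{L}\bigl((I_t)_{t\in\{-u,\dots,v\}}\bigr)\quad (n\to\infty)$$ for all $u,v\in\mathbb{N}$. Let $C=\{t\in\mathbb{Z}: I_t=1\}$. (a) Let $A\subset\mathbb{Z}$ with $0\in A$. Then $P(C=A)=P(C=A-a)$ for all $a\in A$, where $A-a:=\{t\in\mathbb{Z}: a+t\in A\}$. (b) Let $A\subset\mathbb{Z}$ with $0\in A$ and let $t_1,t_2\in\mathbb{Z}$ with $t_1\le 0\le t_2$. Then $$P\bigl(C\cap[t_1,t_2]=A\cap[t_1,t_2]\bigr)=P\bigl(C\cap[t_1-a,t_2-a]=(A-a)\cap[t_1-a,t_2-a]\bigr)$$ for all $a\in A\cap[t_1,t_2]$.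
   Context: $\mathcal{L}(\cdot\mid\cdot)$ denotes conditional law and $\Longrightarrow$ convergence in distribution. Intervals $[t_1,t_2]$ are understood as subsets of $\mathbb{Z}$. *)

From HB Require Import structures.
From mathcomp Require Import all_boot all_order all_algebra.
From mathcomp Require Import all_classical all_reals all_analysis.
Set Implicit Arguments. Unset Strict Implicit. Unset Printing Implicit Defensive.
Import Order.TTheory GRing.Theory Num.Theory.
Import numFieldNormedType.Exports.
Local Open Scope classical_set_scope.
Local Open Scope ring_scope.

(* Window vector (X_t)_{t in {-u,...,v}} as a row vector of length u+v+1;
   entry i corresponds to time i - u. *)
Definition window (R : realType) (T : Type) (X : int -> T -> R) (u v : nat)
  (w : T) : 'rV[R]_(u + v).+1 :=
  \row_(i < (u + v).+1) X (i%:Z - u%:Z) w.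

(* For a {0,1}-valued process the
   finite-dimensional law is determined by the probabilities of the
   events {X_{t_1} = b_1, ..., X_{t_k} = b_k}. *)
Definition stationary01 (R : realType) d (T : measurableType d)
  (P : probability T R) (X : int -> T -> bool) : Prop :=
  forall (s : int) (tb : seq (int * bool)),
    P [set w | all (fun p => X (p.1 + s) w == p.2) tb]
    = P [set w | all (fun p => X p.1 w == p.2) tb].

Definition bounded_continuous (R : realType) (k : nat) (g : 'rV[R]_k -> R)
  : Prop := continuous g /\ exists M : R, forall x, `|g x| <= M.

(* Convergence in distribution of the conditional laws
   L((X^n_t)_{t in [-u,v]} | X^n_0 = 1) to L((Y_t)_{t in [-u,v]}), expressed via
   bounded continuous test functions; the conditional expectation given an
   event B of positive probability is E[g(.) 1_B] / P(B). *)
Definition cond_fidi_cvg (R : realType)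
  (dn : nat -> measure_display) (Tn : forall n, measurableType (dn n))
  (Pn : forall n, probability (Tn n) R) (Xn : forall n, int -> Tn n -> bool)
  d (T : measurableType d) (P : probability T R) (Y : int -> T -> R) : Prop :=
  forall (u v : nat) (g : 'rV[R]_(u + v).+1 -> R), bounded_continuous g ->
    (fun n => Rintegral (Pn n) [set w | Xn n 0 w]
                 (fun w => g (window (fun t w => (Xn n t w)%:R) u v w))
              / fine (Pn n [set w | Xn n 0 w]))
      @ \oo --> Rintegral P setT (fun w => g (window Y u v w)).

Definition Cset (R : realType) (T : Type) (Y : int -> T -> R) (w : T) : set int :=
  [set t | Y t w = 1].

Definition shiftset (A : set int) (a : int) : set int := [set t | A (a + t)].

Definition zint (t1 t2 : int) : set int := [set t | t1 <= t <= t2].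

Set Warnings "-notation-overridden,-ambiguous-paths,-notation-incompatible-prefix".
From HB Require Import structures.
From mathcomp Require Import all_boot all_order all_algebra.
From mathcomp Require Import all_classical all_reals all_analysis.
From mathcomp Require Import measurable_realfun zify.
Set Implicit Arguments. Unset Strict Implicit. Unset Printing Implicit Defensive.
Import Order.TTheory GRing.Theory Num.Theory.
Import numFieldNormedType.Exports.
Local Open Scope classical_set_scope.
Local Open Scope ring_scope.

(* Test the convergence in distribution against [off01_test], a bounded
   continuous function vanishing exactly on {0,1}-valued windows: its
   conditional expectations are 0, so the limit process I is a.s.
   {0,1}-valued.  Testing then against [cylinder_test b], a continuous
   extension of the indicator that a {0,1}-valued window shows the pattern b,
   identifies P(I = b on a window) as the limit of
   P_n(I^n = b on the window) / P_n(I^n_0 = 1) whenever b 0 holds.  By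
   stationarity the numerator is unchanged when window and pattern are both
   shifted by a, and for a in A the shifted pattern still satisfies b 0:
   this is (b).  Part (a) follows from (b) by continuity of P from above
   along growing windows. *)

Section boolean_test_functions.
Variable R : realType.

Definition clip01 (y : R) : R := Num.min 1 `|y|.

Definition bool_test (b : bool) (y : R) : R :=
  if b then clip01 y else 1 - clip01 y.

Definition off01 (y : R) : R := Num.min 1 `|y * (y - 1)|.

Lemma clip01_continuous : continuous clip01.
Proof.
move=> x; apply: (@continuous_min R R (cst 1) (@Num.norm R R)).
  exact: cst_continuous.
exact: norm_continuous.
Qed.

Lemma bool_test_continuous b : continuous (bool_test b).
Proof.
case: b => x; first exact: clip01_continuous.
by apply: continuousB; [exact: cst_continuous | exact: clip01_continuous].
Qed.

Lemma off01_continuous : continuous off01.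
Proof.
move=> x; apply: (@continuous_min R R (cst 1) (fun y => `|y * (y - 1)|)).
  exact: cst_continuous.
apply: (continuous_comp (f := fun y : R => y * (y - 1))); last exact: norm_continuous.
by apply: cvgM; [exact: cvg_id | apply: cvgB; [exact: cvg_id | exact: cvg_cst]].
Qed.

Lemma clip01_itv y : 0 <= clip01 y <= 1.
Proof. by rewrite le_min ler01 normr_ge0 ge_min lexx. Qed.

Lemma bool_test_itv b y : 0 <= bool_test b y <= 1.
Proof.
have /andP[y0 y1] := clip01_itv y.
by case: b; rewrite /bool_test ?y0 ?y1 // subr_ge0 y1 gerBl.
Qed.

Lemma off01_itv y : 0 <= off01 y <= 1.
Proof. by rewrite le_min ler01 normr_ge0 ge_min lexx. Qed.

Lemma bool_test_nat b (c : bool) : bool_test b c%:R = (c == b)%:R.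
Proof.
by case: b; case: c; rewrite /bool_test /clip01 ?normr1 ?normr0 ?minxx
  ?(min_r ler01) ?subrr ?subr0.
Qed.

Lemma off01_nat (c : bool) : off01 c%:R = 0.
Proof. by case: c; rewrite /off01 ?subrr ?mulr0 ?mul0r normr0 (min_r ler01). Qed.

Lemma off01_eq0 y : off01 y = 0 -> y = (y == 1)%:R.
Proof.
move=> /eqP; rewrite eq_le ge_min ler10 /= normr_le0 mulf_eq0 subr_eq0.
by case/andP => /orP[] /eqP -> _; rewrite ?eqxx // eq_sym oner_eq0.
Qed.

Variables u v : nat.

Definition cylinder_test (b : int -> bool) (x : 'rV[R]_(u + v).+1) : R :=
  \prod_(i < (u + v).+1) bool_test (b (i%:Z - u%:Z)) (x ord0 i).

Definition off01_test (x : 'rV[R]_(u + v).+1) : R :=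
  \sum_(i < (u + v).+1) off01 (x ord0 i).

Lemma continuous_coord (f : R -> R) (i : 'I_(u + v).+1) :
  continuous f -> continuous (fun x : 'rV[R]_(u + v).+1 => f (x ord0 i)).
Proof.
move=> cf x; apply: (@continuous_comp _ _ _ (fun x : 'rV[R]_(u + v).+1 => x ord0 i)).
  exact: coord_continuous.
exact: cf.
Qed.

Lemma bounded_continuous_cylinder_test b : bounded_continuous (cylinder_test b).
Proof.
split.
  apply: (@continuous_big R _ *%R 1 xpredT mul_continuous) => i _.
  exact/continuous_coord/bool_test_continuous.
exists 1 => x; rewrite ger0_norm; last first.
  by apply: prodr_ge0 => i _; have /andP[] := bool_test_itv (b (i%:Z - u%:Z)) (x ord0 i).
by apply: prodr_ile1 => i _; exact: bool_test_itv.
Qed.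

Lemma off01_test_ge0 x : 0 <= off01_test x.
Proof. by apply: sumr_ge0 => i _; have /andP[] := off01_itv (x ord0 i). Qed.

Lemma bounded_continuous_off01_test : bounded_continuous off01_test.
Proof.
split.
  apply: (@continuous_big R _ +%R 0 xpredT add_continuous) => i _.
  exact/continuous_coord/off01_continuous.
exists (u + v).+1%:R => x; rewrite ger0_norm ?off01_test_ge0 //.
rewrite -[in X in _ <= X](card_ord (u + v).+1) -sumr_const.
by apply: ler_sum => i _; have /andP[] := off01_itv (x ord0 i).
Qed.

Lemma cylinder_test_nat b (c : 'I_(u + v).+1 -> bool) :
  cylinder_test b (\row_i (c i)%:R) = [forall i, c i == b (i%:Z - u%:Z)]%:R.
Proof.
rewrite /cylinder_test; under eq_bigr do rewrite mxE bool_test_nat.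
case: forallP => [cb | /existsNP[i /negP/negbTE ci]].
  by apply: big1 => i _; rewrite cb.
by rewrite (bigD1 i) //= ci mul0r.
Qed.

Lemma off01_test_nat (c : 'I_(u + v).+1 -> bool) : off01_test (\row_i (c i)%:R) = 0.
Proof. by apply: big1 => i _; rewrite mxE off01_nat. Qed.

Lemma off01_test_eq0 x : off01_test x = 0 -> x = \row_i (x ord0 i == 1)%:R.
Proof.
move=> /psumr_eq0P x0; apply/rowP => i; rewrite mxE.
by apply: off01_eq0; apply: x0 => // j _; have /andP[] := off01_itv (x ord0 j).
Qed.

End boolean_test_functions.

Lemma setI_eq_onP (U : Type) (X Y Z : set U) :
  X `&` Z = Y `&` Z <-> (forall t, Z t -> X t <-> Y t).
Proof.
split => [XYZ t Zt | XYZ]; last first.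
  by apply/seteqP; split => t [Xt Zt]; split => //; apply/(XYZ t Zt).
by split => [Xt | Yt]; [have [] : (Y `&` Z) t by rewrite -XYZ |
                        have [] : (X `&` Z) t by rewrite XYZ].
Qed.

Lemma subset_zint (t1 t2 s1 s2 : int) :
  s1 <= t1 -> t2 <= s2 -> zint t1 t2 `<=` zint s1 s2.
Proof. by move=> st1 ts2 t; rewrite /zint /=; lia. Qed.

Section cylinder.
Variable T : Type.
Implicit Types (X : int -> T -> bool) (b : int -> bool).

Definition cylinder X (t : int) (n : nat) b : set T :=
  [set w | forall k : 'I_n, X (k%:Z + t) w = b (k%:Z + t)].

Lemma indic_cylinder (R : realType) X t n b w :
  \1_(cylinder X t n b) w = [forall k : 'I_n, X (k%:Z + t) w == b (k%:Z + t)]%:R :> R.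
Proof.
rewrite indicE; congr (nat_of_bool _)%:R; apply/idP/idP => [/set_mem cw | /forallP cw].
  by apply/forallP => k; exact/eqP/cw.
by apply/mem_set => k; exact/eqP/cw.
Qed.

Lemma cylinder_all X t n b : cylinder X t n b =
  [set w | all (fun p => X p.1 w == p.2)
                [seq (k%:Z + t, b (k%:Z + t)) | k : 'I_n <- enum 'I_n]].
Proof.
apply/seteqP; split => w /= cw.
  by apply/allP => _ /mapP[k _ ->] /=; rewrite cw.
by move=> k; move/allP: cw => /(_ _ (map_f _ (mem_enum _ k))) /eqP.
Qed.

Lemma Cset_zint_cylinder (R : realType) (I : int -> T -> R) (B : set int) t1 t2 :
  t1 <= t2 ->
  [set w | Cset I w `&` zint t1 t2 = B `&` zint t1 t2] =
  cylinder (fun t w => I t w == 1) t1 `|t2 - t1|.+1 (fun t => `[< B t >]).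
Proof.
move=> t12; apply/seteqP; split => w /= Cw.
  move/setI_eq_onP: Cw => Cw k.
  have zk : zint t1 t2 (k%:Z + t1) by have := ltn_ord k; rewrite /zint /=; lia.
  by have [CB BC] := Cw _ zk; apply/eqP/asboolP; [exact: CB | exact: BC].
apply/(@setI_eq_onP int) => t; rewrite /zint /= => zt.
have kn : (`|t - t1| < `|t2 - t1|.+1)%N by lia.
have := Cw (Ordinal kn); rewrite /= (_ : `|t - t1|%:Z + t1 = t); last by lia.
move=> Ct; split => [Ctw | Bt]; first by apply/asboolP; rewrite -Ct; exact/eqP.
by apply/eqP; rewrite Ct; exact/asboolP.
Qed.

End cylinder.

Section cylinder_measure.
Context d (T : measurableType d) (R : realType).
Implicit Types (X : int -> T -> bool) (b : int -> bool).

Lemma measurable_eq_bool (f : T -> bool) (c : bool) :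
  measurable [set w | f w] -> measurable [set w | f w = c].
Proof.
move=> mf; case: c => //; rewrite (_ : [set w | f w = false] = ~` [set w | f w]).
  exact: measurableC.
by apply/seteqP; split => w /=; case: (f w).
Qed.

Lemma measurable_cylinder X t n b :
  (forall s, measurable [set w | X s w]) -> measurable (cylinder X t n b).
Proof.
move=> mX; rewrite (_ : cylinder X t n b =
    \bigcap_(k in [set: 'I_n]) [set w | X (k%:Z + t) w = b (k%:Z + t)]).
  apply: fin_bigcap_measurable => [|k _]; first exact: finite_finset.
  exact: measurable_eq_bool.
by apply/seteqP; split => [w cw k _ | w cw k]; exact: cw.
Qed.

Lemma stationary01_cylinder (P : probability T R) X : stationary01 P X ->
  forall t s n b, P (cylinder X t n b) = P (cylinder X (t - s) n (fun x => b (s + x))).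
Proof.
move=> st t s n b; rewrite !cylinder_all -[in RHS](st s); congr (P _).
apply: eq_set => w; rewrite !all_map; congr is_true; apply: eq_all => k /=.
by rewrite -addrA subrK [s + _]addrC -addrA subrK.
Qed.

End cylinder_measure.

Lemma Rintegral_eq0_ae d (T : measurableType d) (R : realType)
    (mu : {finite_measure set T -> \bar R}) (f : T -> R) (M : R) :
  measurable_fun setT f -> (forall x, 0 <= f x) -> (forall x, f x <= M) ->
  Rintegral mu setT f = 0 -> {ae mu, forall x, f x = 0}.
Proof.
move=> mf f0 fM intf0.
(* [Rintegral] is [fine] of the integral, hence also 0 if the integral is
   infinite: integrability is what rules this out. *)
have intf : mu.-integrable setT (EFin \o f).
  apply: measurable_bounded_integrable => //; first exact: fin_num_fun_lty.
  apply: filterS (nbhs_pinfty_ge (num_real M)) => K MK x _ /=.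
  by rewrite ger0_norm // (le_trans (fM x)).
have : (\int[mu]_x `|(f x)%:E| = 0)%E.
  under eq_integral => x _ do rewrite gee0_abs ?lee_fin ?f0 //.
  rewrite -[LHS]fineK; first by move: intf0; rewrite /Rintegral => ->.
  by have := integrable_fin_num measurableT intf.
move/(ae_eq_integral_abs mu measurableT ((measurable_EFinP _ _).2 mf)).
by apply: filterS => x /(_ Logic.I) [].
Qed.

Lemma cvg_P_Cset_setI d (T : measurableType d) (R : realType)
    (P : probability T R) (I : int -> T -> R) (B : set int) (Z : nat -> set int) :
  (forall m n, (m <= n)%N -> Z m `<=` Z n) -> \bigcup_k Z k = setT ->
  (forall k, measurable [set w | Cset I w `&` Z k = B `&` Z k]) ->
  (fun k => P [set w | Cset I w `&` Z k = B `&` Z k]) @ \oo -->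
  P [set w | Cset I w = B].
Proof.
move=> Zinc Zcover mF.
set F := fun k => [set w | Cset I w `&` Z k = B `&` Z k].
have capF : \bigcap_k F k = [set w | Cset I w = B].
  apply/seteqP; split => w /= Fw; last by move=> k _; rewrite /F /= Fw.
  rewrite -[Cset I w]setIT -[B]setIT -Zcover; apply/setI_eq_onP => t [k _ Zkt].
  exact: (setI_eq_onP _ _ _).1 (Fw k Logic.I) t Zkt.
rewrite -capF; apply: nonincreasing_cvg_mu => //.
- by rewrite ltey_eq fin_num_measure.
- exact: bigcapT_measurable.
- move=> m n mn; apply/subsetPset => w /setI_eq_onP Fnw.
  by apply/setI_eq_onP => t /(Zinc _ _ mn); exact: Fnw.
Qed.

Lemma Rintegral_indic d (T : measurableType d) (R : realType) (mu : measure T R)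
    (D A : set T) :
  measurable D -> measurable A -> Rintegral mu D \1_A = fine (mu (A `&` D)).
Proof. by move=> mD mA; rewrite /Rintegral integral_indic. Qed.

Section conditional_limit.
Context (R : realType) (d : measure_display) (T : measurableType d)
  (P : probability T R) (I : int -> T -> R)
  (dn : nat -> measure_display) (Tn : forall n, measurableType (dn n))
  (Pn : forall n, probability (Tn n) R) (In : forall n, int -> Tn n -> bool).
Arguments In : clear implicits.
Arguments Pn : clear implicits.
Hypothesis mI : forall t, measurable_fun setT (I t).
Hypothesis mIn : forall n t, measurable [set w | In n t w].
Hypothesis cvg_In : cond_fidi_cvg Pn In P I.

Implicit Types (u v : nat) (b : int -> bool).

Let Ieq1 t w := I t w == 1.

Lemma measurable_Ieq1 t : measurable [set w | Ieq1 t w].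
Proof.
have := mI t measurableT (measurable_set1 1); rewrite setTI.
by congr measurable; apply/seteqP; split => w /= /eqP.
Qed.

Lemma measurable_Cset_zint (B : set int) t1 t2 : t1 <= t2 ->
  measurable [set w | Cset I w `&` zint t1 t2 = B `&` zint t1 t2].
Proof.
by move=> t12; rewrite Cset_zint_cylinder //; exact: measurable_cylinder measurable_Ieq1.
Qed.

Lemma measurable_cylinder_test_window u v b :
  measurable_fun setT (fun w => cylinder_test b (window I u v w)).
Proof.
rewrite /cylinder_test; under eq_fun do under eq_bigr do rewrite mxE.
apply: measurable_prod => i _; apply: measurableT_comp (mI _).
exact: continuous_measurable_fun (@bool_test_continuous R _).
Qed.

Lemma measurable_off01_test_window u v :
  measurable_fun setT (fun w => off01_test (window I u v w)).
Proof.
rewrite /off01_test; under eq_fun do under eq_bigr do rewrite mxE.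
apply: measurable_sum => i; apply: measurableT_comp (mI _).
exact: continuous_measurable_fun (@off01_continuous R).
Qed.

Lemma Rintegral_cylinder_test_In n u v b : b 0 ->
  Rintegral (Pn n) [set w | In n 0 w]
    (fun w => cylinder_test b (window (fun t w => (In n t w)%:R) u v w))
  = fine (Pn n (cylinder (In n) (- u%:Z) (u + v).+1 b)).
Proof.
move=> b0; under eq_Rintegral do rewrite /window cylinder_test_nat -indic_cylinder.
rewrite Rintegral_indic ?setIidl //; last exact: measurable_cylinder.
by move=> w /(_ (Ordinal (leq_addr v u : (u < (u + v).+1)%N))) /=; rewrite addrN b0.
Qed.

Lemma window_I_bool_ae u v :
  {ae P, forall w, window I u v w = \row_i (I (i%:Z - u%:Z) w == 1)%:R}.
Proof.
have [_ [M off01_le]] := @bounded_continuous_off01_test R u v.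
have : Rintegral P setT (fun w => off01_test (window I u v w)) = 0.
  have := cvg_In (@bounded_continuous_off01_test R u v).
  under eq_fun do under eq_Rintegral do rewrite /window off01_test_nat.
  under eq_fun do rewrite (Rintegral_cst _ (mIn _ 0)) !mul0r.
  by move/(cvg_lim (@Rhausdorff R)); rewrite lim_cst.
move=> int0; have fM w : off01_test (window I u v w) <= M.
  exact: le_trans (ler_norm _) (off01_le _).
apply: filterS (Rintegral_eq0_ae (measurable_off01_test_window u v) _ fM int0) => [w | w].
  by move=> /off01_test_eq0 ->; apply/rowP => i; rewrite !mxE.
exact: off01_test_ge0.
Qed.

Lemma Rintegral_cylinder_test_I u v b :
  Rintegral P setT (fun w => cylinder_test b (window I u v w))
  = fine (P (cylinder Ieq1 (- u%:Z) (u + v).+1 b)).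
Proof.
have mcyl := measurable_cylinder (- u%:Z) (u + v).+1 b measurable_Ieq1.
rewrite -[cylinder _ _ _ _]setIT -Rintegral_indic //; congr fine.
apply: ae_eq_integral => //.
- by apply/measurable_EFinP; exact: measurable_cylinder_test_window.
- by apply/measurable_EFinP; exact: measurable_indic.
apply: filterS (window_I_bool_ae u v) => w -> _ /=.
by rewrite cylinder_test_nat indic_cylinder.
Qed.

Lemma cvg_cylinder t n b : t <= 0 < t + n%:Z -> b 0 ->
  (fun k => fine (Pn k (cylinder (In k) t n b)) / fine (Pn k [set w | In k 0 w]))
  @ \oo --> fine (P (cylinder Ieq1 t n b)).
Proof.
move=> /andP[t0 tn] b0.
have [u [v [-> ->]]] : exists u v : nat, t = - u%:Z /\ n = (u + v).+1.
  by exists `|t|%N, (n.-1 - `|t|)%N; lia.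
have := cvg_In (@bounded_continuous_cylinder_test R u v b).
rewrite Rintegral_cylinder_test_I.
by under eq_fun do rewrite Rintegral_cylinder_test_In //.
Qed.

Hypothesis stationary_In : forall n, stationary01 (Pn n) (In n).

Lemma P_Cset_zint_shift (A : set int) t1 t2 a : A 0 -> t1 <= 0 <= t2 ->
  (A `&` zint t1 t2) a ->
  P [set w | Cset I w `&` zint t1 t2 = A `&` zint t1 t2]
  = P [set w | Cset I w `&` zint (t1 - a) (t2 - a)
               = shiftset A a `&` zint (t1 - a) (t2 - a)].
Proof.
move=> A0 /andP[t10 t20] [Aa /andP[t1a at2]].
rewrite !Cset_zint_cylinder; [|lia|lia].
rewrite (_ : t2 - a - (t1 - a) = t2 - t1); last by lia.
set n := `|t2 - t1|.+1; pose bA t := `[< A t >].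
have mcyl t b : measurable (cylinder Ieq1 t n b).
  exact: measurable_cylinder measurable_Ieq1.
rewrite -[LHS]fineK ?fin_num_measure // -[RHS]fineK ?fin_num_measure //.
congr EFin.
have win1 : t1 <= 0 < t1 + n%:Z by lia.
have win2 : t1 - a <= 0 < t1 - a + n%:Z by lia.
have Aa0 : A (a + 0) by rewrite addr0.
rewrite -(cvg_lim (@Rhausdorff R) (cvg_cylinder (b := bA) win1 (asboolT A0))).
rewrite -(cvg_lim (@Rhausdorff R)
  (cvg_cylinder (b := fun t => bA (a + t)) win2 (asboolT Aa0))).
congr (lim (_ @ \oo)); apply/funext => k.
by rewrite (stationary01_cylinder (stationary_In k) t1 a).
Qed.

Lemma P_Cset_shift (A : set int) a : A 0 -> A a ->
  P [set w | Cset I w = A] = P [set w | Cset I w = shiftset A a].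
Proof.
move=> A0 Aa; pose N k : int := (k + `|a|)%N.
have window_cvg (B : set int) c :
    (fun k => P [set w | Cset I w `&` zint (- N k - c) (N k - c)
                         = B `&` zint (- N k - c) (N k - c)])
    @ \oo --> P [set w | Cset I w = B].
  apply: cvg_P_Cset_setI => [m k mk | | k].
  - by apply: subset_zint; rewrite /N; lia.
  - apply/seteqP; split => // t _; exists (absz (t + c)) => //.
    by rewrite /zint /N /=; lia.
  - by apply: measurable_Cset_zint; rewrite /N; lia.
rewrite -(cvg_lim (@ereal_hausdorff R) (window_cvg A 0)).
rewrite -(cvg_lim (@ereal_hausdorff R) (window_cvg _ a)).
congr (lim (_ @ \oo)); apply/funext => k; rewrite !subr0.
apply: P_Cset_zint_shift => //; first by rewrite /N; lia.
by split => //; rewrite /zint /N /=; lia.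
Qed.

End conditional_limit.

Theorem corollary2p2 (R : realType) (d : measure_display) (T : measurableType d)
  (P : probability T R) (I : int -> T -> R)
  (dn : nat -> measure_display) (Tn : forall n, measurableType (dn n))
  (Pn : forall n, probability (Tn n) R) (In : forall n, int -> Tn n -> bool) :
  (forall t, measurable_fun setT (I t)) ->
  (forall n t, measurable [set w | In n t w]) ->
  (forall n, stationary01 (Pn n) (In n)) ->
  (forall n, (0 < Pn n [set w | In n 0%R w])%E) ->
  cond_fidi_cvg Pn In P I ->
  (forall A : set int, A 0 -> forall a, A a ->
     P [set w | Cset I w = A] = P [set w | Cset I w = shiftset A a])
  /\
  (forall (A : set int) (t1 t2 : int), A 0 -> t1 <= 0 <= t2 ->
     forall a, (A `&` zint t1 t2) a ->
       P [set w | Cset I w `&` zint t1 t2 = A `&` zint t1 t2]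
       = P [set w | Cset I w `&` zint (t1 - a) (t2 - a)
                    = shiftset A a `&` zint (t1 - a) (t2 - a)]).
Proof.
move=> mI mIn stationary_In _ cvg_In; split => [A A0 a Aa | A t1 t2 A0 t12 a Aa].
- exact: (P_Cset_shift mI mIn cvg_In stationary_In).
- exact: (P_Cset_zint_shift mI mIn cvg_In stationary_In).
Qed.
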